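(* Let $G$ be a graph with a cycle double cover $\mathcal D$, and let $G^+$ be a weak 9-enlargement of $G$, obtained from an edge $xy$ and a vertex $u$ (with no disk containing both $u$ and the edge $xy$) by subdividing $xy$ and joining the new vertex to $u$. If $G\setminus\{u,x,y\}$ is connected, then $G^+$ has a minor isomorphic to an $i$-enlargement of $G$ with respect to $\mathcal D$ for some $i\in\{1,3,9\}$.
   Context: Graphs are finite and simple. A cycle double cover of $G$ is a set $\mathcal D$ of distinct cycles (disks) such that each edge lies in exactly two disks. Two elements (vertices or edges) are confluent if some disk contains both. Splitting: for a vertex $v$ of degree $\ge4$ and a partition $(N_1,N_2)$ of its neighbours with $|N_1|,|N_2|\ge2$, replace $v$ by adjacent new vertices $v_1,v_2$ with $v_i$ adjacent to $N_i$. The split is conforming (w.r.t. $\mathcal D$) if (S1) among the disks containing $v$ exactly two, $D_1,D_2$, have their two neighbours of $v$ one in $N_1$ and one in $N_2$, and (S2) $D_1\cap D_2=\{v\}$; otherwise non-conforming. Enlargements: a 1-enlargement adds an edge between two non-confluent vertices; a 3-enlargement performs a non-conforming split of a vertex; a 9-enlargement, for a vertex $u$ and an edge $xy$ such that no disk contains both $u$ and the edge $xy$, $u$ is confluent with $x$ and with $y$, $u$ is adjacent to neither $x$ nor $y$, and $G\setminus\{u,x,y\}$ is connected, subdivides $xy$ by a new vertex and joins it to $u$. A weak 9-enlargement is obtained in the same way from any edge $xy$ and vertex $u$ such that no disk contains both $u$ and the edge $xy$. *)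

(* Finite simple graphs are given by a symmetric irreflexive
   relation [e : rel T] on a finType [T]. *)
From mathcomp Require Import all_boot all_order.
Set Implicit Arguments.
Unset Strict Implicit.
Unset Printing Implicit Defensive.

Section Graphs.
Variable T : finType.
Variable e : rel T.

Definition is_edge (E : {set T}) : bool :=
  [exists x, exists y, e x y && (E == [set x; y])].

(* A disk (cycle) is represented by its edge set C. *)
Definition cyc_adj (C : {set {set T}}) : rel T :=
  fun x y => (x != y) && ([set x; y] \in C).

Definition verts (C : {set {set T}}) : {set T} :=
  [set x | [exists y, cyc_adj C x y]].

Definition is_cycle (C : {set {set T}}) : bool :=
  [&& C != set0,
      [forall E in C, is_edge E],
      [forall x in verts C, #|[set y | cyc_adj C x y]| == 2] &
      [forall x in verts C, forall y in verts C, connect (cyc_adj C) x y]].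

Definition is_cdc (D : {set {set {set T}}}) : Prop :=
  (forall C, C \in D -> is_cycle C) /\
  (forall x y, e x y -> #|[set C in D | [set x; y] \in C]| = 2).

Definition confluent_vv (D : {set {set {set T}}}) (a b : T) : Prop :=
  exists2 C, C \in D & (a \in verts C) /\ (b \in verts C).

Definition disk_contains_ve (D : {set {set {set T}}}) (u x y : T) : Prop :=
  exists2 C, C \in D & (u \in verts C) /\ ([set x; y] \in C).

Definition connected_in (S : {set T}) : Prop :=
  forall a b, a \in S -> b \in S ->
    connect (fun p q => [&& p \in S, q \in S & e p q]) a b.

Definition nbhd (v : T) : {set T} := [set w | e v w].

Definition add_edge (a b : T) : rel T :=
  fun p q => [|| e p q, (p == a) && (q == b) | (p == b) && (q == a)].

(* ---------- splitting ----------
   Vertex v is replaced by v1 := Some v (adjacent to N1) and v2 := None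
   (adjacent to N2 := N(v) \ N1); v1 and v2 are adjacent. *)
Definition split_adj (v : T) (N1 : {set T}) : rel (option T) :=
  fun p q =>
  let N2 := nbhd v :\: N1 in
  match p, q with
  | Some a, Some b =>
      if a == v then b \in N1 else if b == v then a \in N1 else e a b
  | Some a, None => (a == v) || (a \in N2)
  | None, Some b => (b == v) || (b \in N2)
  | None, None => false
  end.

Definition split_ok (v : T) (N1 : {set T}) : Prop :=
  [/\ 4 <= #|nbhd v|, N1 \subset nbhd v, 2 <= #|N1| & 2 <= #|nbhd v :\: N1|].

Definition crosses (v : T) (N1 : {set T}) (C : {set {set T}}) : bool :=
  [exists w1 in N1, exists w2 in nbhd v :\: N1,
     ([set v; w1] \in C) && ([set v; w2] \in C)].

Definition conforming (D : {set {set {set T}}}) (v : T) (N1 : {set T}) : Prop :=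
  exists D1 D2, [/\ D1 \in D, D2 \in D, D1 != D2,
     [set C in D | (v \in verts C) && crosses v N1 C] = [set D1; D2] &
     verts D1 :&: verts D2 = [set v]].

Definition nonconforming_split (D : {set {set {set T}}}) (v : T) (N1 : {set T})
  : Prop := split_ok v N1 /\ ~ conforming D v N1.

Definition subdiv_join (u x y : T) : rel (option T) :=
  fun p q =>
  match p, q with
  | Some a, Some b => e a b && ~~ (((a == x) && (b == y)) || ((a == y) && (b == x)))
  | Some a, None => [|| a == x, a == y | a == u]
  | None, Some b => [|| b == x, b == y | b == u]
  | None, None => false
  end.

(* Conditions for a (non-weak) 9-enlargement from u and the edge xy. *)
Definition nine_ok (D : {set {set {set T}}}) (u x y : T) : Prop :=
  [/\ e x y, ~ disk_contains_ve D u x y,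
      confluent_vv D u x /\ confluent_vv D u y,
      ~~ e u x /\ ~~ e u y &
      connected_in (~: [set u; x; y])].

End Graphs.

(* G has a minor isomorphic to H (H-model with branch sets f h). *)
Definition has_minor (T : finType) (e : rel T) (T' : finType) (e' : rel T')
  : Prop :=
  exists f : T' -> {set T},
    [/\ forall h, f h != set0,
        forall h, connected_in e (f h),
        forall h h', h != h' -> [disjoint f h & f h'] &
        forall h h', e' h h' -> exists a b, [/\ a \in f h, b \in f h' & e a b]].

(* If u is not confluent with x (or y), contracting the edge between x and the
   subdivision vertex turns G+ into G + ux, a 1-enlargement.  If u is adjacent
   to x (or y), then G+ is literally the split of x with N2 = {y, u}; the two
   disks through xy both cross this partition and share y besides x, so the
   split is non-conforming, and x has degree at least 4 because the disks
   through xy and through xu leave x along a common fourth edge otherwise,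
   which would then lie in three disks.  In the remaining case G+ itself is a
   9-enlargement. *)
From mathcomp Require Import all_boot.
From Stdlib Require Import Classical.
Set Implicit Arguments. Unset Strict Implicit. Unset Printing Implicit Defensive.

Lemma eq_set2 (T : finType) (a b p q : T) : a != b -> [set a; b] = [set p; q] ->
  (a == p) && (b == q) || (a == q) && (b == p).
Proof.
move=> ab E.
have : a \in [set p; q] by rewrite -E set21.
have : b \in [set p; q] by rewrite -E set22.
rewrite !inE => /orP[]/eqP? /orP[]/eqP?; subst; rewrite ?eqxx ?orbT //; by rewrite eqxx in ab.
Qed.

Lemma eq_has_minor (T T' : finType) (r1 r2 : rel T) (e' : rel T') :
  r1 =2 r2 -> has_minor r1 e' -> has_minor r2 e'.
Proof.
move=> E [f [f_neq0 f_conn f_disj f_adj]]; exists f; split=> // [h a b ha hb|h h' /f_adj].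
  rewrite -(@eq_connect _ (fun p q => [&& p \in f h, q \in f h & r1 p q])) ?f_conn //.
  by move=> p q; rewrite E.
by case=> a [b [ha hb hr]]; exists a, b; rewrite -E.
Qed.

Lemma subgraph_minor (T : finType) (r r' : rel T) :
  subrel r' r -> has_minor r r'.
Proof.
move=> sub; exists (fun p => [set p]); split.
- by move=> h; apply/set0Pn; exists h; rewrite set11.
- by move=> h a b; rewrite !inE => /eqP-> /eqP->; exact: connect0.
- by move=> h h' hh'; rewrite disjoints1 inE.
- by move=> h h' /sub ?; exists h, h'; rewrite !set11.
Qed.

Section Disks.
Variables (T : finType) (e : rel T).
Hypothesis se : symmetric e.

Lemma verts_edgeL (C : {set {set T}}) a b : a != b -> [set a; b] \in C -> a \in verts C.
Proof. by move=> ab H; rewrite inE; apply/existsP; exists b; rewrite /cyc_adj ab H. Qed.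

Lemma verts_edgeR (C : {set {set T}}) a b : a != b -> [set a; b] \in C -> b \in verts C.
Proof. by rewrite eq_sym setUC; exact: verts_edgeL. Qed.

Lemma cycle_edge C a b : is_cycle e C -> [set a; b] \in C -> a != b -> e a b.
Proof.
case/and4P=> _ /forallP C_edges _ _ abC ab.
move: (C_edges [set a; b]); rewrite abC => /existsP[p /existsP[q /andP[epq /eqP E]]].
by case/orP: (eq_set2 ab E) => /andP[/eqP-> /eqP->]; rewrite // se.
Qed.

Lemma cycle_other_neighbour C a b : is_cycle e C -> [set a; b] \in C -> a != b ->
  exists w, [/\ w != b, e a w & [set a; w] \in C].
Proof.
move=> C_cyc abC ab; case/and4P: (C_cyc) => _ _ /forallP C_deg2 _.
move: (C_deg2 a); rewrite (verts_edgeL ab abC) => /cards2P[p [q [pq E]]].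
have [w [wb]] : exists w, w != b /\ w \in [set v | cyc_adj C a v].
  rewrite E; case: (eqVneq b p) => [->|bp]; [exists q | exists p];
    by rewrite ?set21 ?set22 eq_sym.
rewrite inE => /andP[aw awC]; exists w; split=> //; exact: cycle_edge awC aw.
Qed.

Lemma cdc_edge_disks D a b : is_cdc e D -> e a b ->
  exists C1 C2, [/\ C1 \in D, C2 \in D, C1 != C2, [set a; b] \in C1 & [set a; b] \in C2].
Proof.
case=> _ cover eab; case/eqP/cards2P: (cover a b eab) => C1 [C2 [C12 E]].
have : C1 \in [set C in D | [set a; b] \in C] by rewrite E set21.
have : C2 \in [set C in D | [set a; b] \in C] by rewrite E set22.
by rewrite !inE => /andP[? ?] /andP[? ?]; exists C1, C2.
Qed.

Lemma cdc_no_three_disks D a b C1 C2 C3 : is_cdc e D -> e a b ->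
  C1 \in D -> C2 \in D -> C3 \in D -> C1 != C2 -> C2 != C3 -> C3 != C1 ->
  [set a; b] \in C1 -> [set a; b] \in C2 -> [set a; b] \in C3 -> False.
Proof.
move=> [_ cover] eab h1 h2 h3 C12 C23 C31 c1 c2 c3.
suff : 2 < #|[set C in D | [set a; b] \in C]| by rewrite cover.
by apply/card_gt2P; exists C1, C2, C3; rewrite !inE h1 h2 h3 c1 c2 c3.
Qed.

Lemma not_disk_contains_ve_neq D u x y : is_cdc e D -> e x y -> x != y ->
  ~ disk_contains_ve D u x y -> u != x /\ u != y.
Proof.
move=> cdc exy xy nd; have [C [_ [CD _ _ xyC _]]] := cdc_edge_disks cdc exy.
split; apply/eqP=> uE; apply: nd; exists C; rewrite // uE.
  by split=> //; exact: verts_edgeL xyC.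
by split=> //; exact: verts_edgeR xyC.
Qed.

End Disks.

Lemma disk_contains_veC (T : finType) (D : {set {set {set T}}}) u x y :
  disk_contains_ve D u y x -> disk_contains_ve D u x y.
Proof. by case=> C CD [uC yxC]; exists C; rewrite // setUC. Qed.

Lemma subdiv_joinC (T : finType) (e : rel T) u x y :
  subdiv_join e u y x =2 subdiv_join e u x y.
Proof.
case=> [a|] [b|] //=; first by rewrite orbC.
  by rewrite orbA (orbC (a == y)) -orbA.
by rewrite orbA (orbC (b == y)) -orbA.
Qed.

Lemma contract_subdivision_minor (T : finType) (e : rel T) (u x y : T) :
  has_minor (subdiv_join e u x y) (add_edge e u x).
Proof.
pose f h := if h == x then [set Some x; None] else [set Some h].
have f_h h : Some h \in f h by rewrite /f; case: eqP => [->|_]; rewrite ?set21 ?set11.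
have f_x : None \in f x by rewrite /f eqxx set22.
exists f; split.
- by move=> h; apply/set0Pn; exists (Some h).
- move=> h a b; rewrite /f; case: eqP => _; last first.
    by rewrite !inE => /eqP-> /eqP->; exact: connect0.
  rewrite !inE => /orP[]/eqP-> /orP[]/eqP->;
    by [exact: connect0 | apply: connect1; rewrite !inE /= !eqxx].
- move=> h h' hh'; apply/pred0P => p /=; rewrite /f.
  case: (eqVneq h x) => [hx|hx]; case: (eqVneq h' x) => [h'x|h'x]; rewrite !inE.
  + by move: hh'; rewrite hx h'x eqxx.
  + by apply/negP=> /andP[/orP[]/eqP-> // /eqP [] /eqP]; rewrite eq_sym (negbTE h'x).
  + by apply/negP=> /andP[/eqP-> /orP[]/eqP // [] /eqP]; rewrite (negbTE hx).
  + by apply/negP=> /andP[/eqP-> /eqP [] /eqP]; rewrite (negbTE hh').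
- move=> h h' /or3P[ehh'|/andP[/eqP-> /eqP->]|/andP[/eqP-> /eqP->]].
  + case: (boolP ((h == x) && (h' == y))) => [/andP[/eqP-> /eqP->]|nxy].
      by exists None, (Some y); rewrite f_h f_x /= eqxx orbT.
    case: (boolP ((h == y) && (h' == x))) => [/andP[/eqP-> /eqP->]|nyx].
      by exists (Some y), None; rewrite f_h f_x /= eqxx orbT.
    by exists (Some h), (Some h'); rewrite !f_h /= ehh' negb_or nxy nyx.
  + by exists (Some u), None; rewrite f_h f_x /= eqxx !orbT.
  + by exists None, (Some u); rewrite f_h f_x /= eqxx !orbT.
Qed.

Section SplitAtNeighbour.
Variables (T : finType) (e : rel T) (D : {set {set {set T}}}) (u x y : T).
Hypotheses (se : symmetric e) (ie : irreflexive e) (cdc : is_cdc e D).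
Hypotheses (exy : e x y) (eux : e u x) (nd : ~ disk_contains_ve D u x y).

Let xy : x != y. Proof. by apply: contraTneq exy => ->; rewrite ie. Qed.
Let xu : x != u. Proof. by apply: contraTneq eux => ->; rewrite ie. Qed.
Let uy : u != y. Proof. by case: (not_disk_contains_ve_neq cdc exy xy nd). Qed.

Lemma no_disk_xy_xu C : C \in D -> [set x; y] \in C -> [set x; u] \in C -> False.
Proof. by move=> CD xyC xuC; apply: nd; exists C => //; split=> //; exact: verts_edgeR xuC. Qed.

Lemma disk_other_edge_off_yu C a : C \in D -> a \in [set y; u] -> [set x; a] \in C ->
  exists w, [/\ e x w, w \notin [set y; u] & [set x; w] \in C].
Proof.
move=> CD a_yu xaC; have xa : x != a by case/set2P: a_yu => ->.
have [w [wa exw xwC]] := cycle_other_neighbour se (cdc.1 C CD) xaC xa.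
exists w; split=> //; apply: contraNN wa => w_yu.
case/set2P: a_yu xaC => -> xaC; case/set2P: w_yu xwC => -> xwC;
  by [rewrite eqxx | case: (no_disk_xy_xu CD xaC xwC) | case: (no_disk_xy_xu CD xwC xaC)].
Qed.

Lemma nbhd_ge4 : 4 <= #|nbhd e x|.
Proof.
have [C1 [C2 [C1D C2D C12 xyC1 xyC2]]] := cdc_edge_disks cdc exy.
have [C3 [_ [C3D _ _ xuC3 _]]] := cdc_edge_disks cdc (etrans (se x u) eux).
have [w1 [xw1 w1_off xw1C1]] := disk_other_edge_off_yu C1D (set21 y u) xyC1.
have [w2 [xw2 w2_off xw2C2]] := disk_other_edge_off_yu C2D (set21 y u) xyC2.
have [w3 [xw3 w3_off xw3C3]] := disk_other_edge_off_yu C3D (set22 y u) xuC3.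
rewrite leqNgt; apply/negP => deg_le3.
have nbhdE : nbhd e x = [set y; u; w1].
  apply/eqP; rewrite eq_sym eqEcard; apply/andP; split.
    by apply/subsetP => v; rewrite !inE => /orP[/orP[]|]/eqP->; rewrite // se.
  rewrite -ltnS; apply: leq_trans deg_le3 _.
  by rewrite setUC cardsU1 cards2 w1_off eq_sym uy.
have nbhd_off v : e x v -> v \notin [set y; u] -> v = w1.
  move=> xv; have : v \in nbhd e x by rewrite inE.
  by rewrite nbhdE !inE -orbA => /or3P[]/eqP-> //; rewrite eqxx ?orbT.
rewrite (nbhd_off _ xw2 w2_off) in xw2C2; rewrite (nbhd_off _ xw3 w3_off) in xw3C3.
have C3_new C : C \in D -> [set x; y] \in C -> C3 != C.
  by move=> CD xyC; apply: contraPneq (no_disk_xy_xu CD xyC) => <-.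
apply: (cdc_no_three_disks cdc xw1 C1D C2D C3D C12 _ (C3_new _ C1D xyC1)) => //.
by rewrite eq_sym C3_new.
Qed.

Let N1 := nbhd e x :\: [set y; u].

Lemma yu_sub_nbhd : [set y; u] \subset nbhd e x.
Proof. by apply/subsetP => v; rewrite !inE => /orP[]/eqP->; rewrite // se. Qed.

Lemma split_yu_part2 : nbhd e x :\: N1 = [set y; u].
Proof. by rewrite setDDr setDv set0U; apply/setIidPr; exact: yu_sub_nbhd. Qed.

Lemma split_ok_yu : split_ok e x N1.
Proof.
have card_N1 : #|N1| = #|nbhd e x| - 2.
  by rewrite cardsD (setIidPr yu_sub_nbhd) cards2 eq_sym uy.
split; [exact: nbhd_ge4 | exact: subsetDl | |].
  by rewrite card_N1 ltn_subRL; exact: nbhd_ge4.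
by rewrite split_yu_part2 cards2 eq_sym uy.
Qed.

Lemma split_yu_nonconforming : ~ conforming e D x N1.
Proof.
case=> [D1 [D2 [D1D D2D D12 crossE meetE]]].
have crossing C : C \in D -> [set x; y] \in C -> C \in [set D1; D2] /\ y \in verts C.
  move=> CD xyC; split; last exact: verts_edgeR xyC.
  have [w [xw w_off xwC]] := disk_other_edge_off_yu CD (set21 y u) xyC.
  rewrite -crossE inE CD (verts_edgeL xy xyC); apply/existsP; exists w.
  rewrite inE w_off inE xw; apply/existsP; exists y.
  by rewrite split_yu_part2 set21 xyC xwC.
have [C1 [C2 [C1D C2D C12 xyC1 xyC2]]] := cdc_edge_disks cdc exy.
have [/set2P C1E yC1] := crossing _ C1D xyC1.
have [/set2P C2E yC2] := crossing _ C2D xyC2.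
have : y \in verts D1 :&: verts D2.
  case: C1E => ?; case: C2E => ?; subst; rewrite ?eqxx // in C12;
    by rewrite inE yC1 yC2.
by rewrite meetE inE eq_sym (negbTE xy).
Qed.

Lemma split_yu_subdivision : subrel (split_adj e x N1) (subdiv_join e u x y).
Proof.
rewrite /split_adj split_yu_part2 => -[a|] [b|] //=; rewrite ?inE //.
case: eqP => [-> /andP[/norP[/negbTE-> _] ->]|_]; first by rewrite andbF (negbTE xy).
case: eqP => [-> /andP[/norP[/negbTE-> _] xa]|_ ->]; first by rewrite se xa (negbTE xy).
by rewrite andbF.
Qed.

Lemma split_yu_enlargement : nonconforming_split e D x N1 /\
  has_minor (subdiv_join e u x y) (split_adj e x N1).
Proof.
split; first by split; [exact: split_ok_yu | exact: split_yu_nonconforming].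
exact/subgraph_minor/split_yu_subdivision.
Qed.

End SplitAtNeighbour.

Theorem lemma6p1 (T : finType) (e : rel T) (D : {set {set {set T}}})
    (u x y : T) :
  symmetric e -> irreflexive e -> is_cdc e D ->
  e x y -> ~ disk_contains_ve D u x y ->
  connected_in e (~: [set u; x; y]) ->
  (* i = 1 *)
  (exists a b : T, [/\ a != b, ~ confluent_vv D a b &
      has_minor (subdiv_join e u x y) (add_edge e a b)])
  \/
  (* i = 3 *)
  (exists (v : T) (N1 : {set T}), nonconforming_split e D v N1 /\
      has_minor (subdiv_join e u x y) (split_adj e v N1))
  \/
  (* i = 9 *)
  (exists u' x' y' : T, nine_ok e D u' x' y' /\
      has_minor (subdiv_join e u x y) (subdiv_join e u' x' y')).
Proof.
move=> se ie cdc exy nd conn.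
have xy : x != y by apply: contraTneq exy => ->; rewrite ie.
have eyx : e y x by rewrite se.
have nd' : ~ disk_contains_ve D u y x by move/disk_contains_veC.
have [ux uy] := not_disk_contains_ve_neq cdc exy xy nd.
have [cx|ncx] := classic (confluent_vv D u x); last first.
  by left; exists u, x; split=> //; exact: contract_subdivision_minor.
have [cy|ncy] := classic (confluent_vv D u y); last first.
  left; exists u, y; split=> //.
  exact: eq_has_minor (subdiv_joinC e u x y) (contract_subdivision_minor e u y x).
case: (boolP (e u x)) => [eux|neux].
  by right; left; exists x, (nbhd e x :\: [set y; u]); exact: split_yu_enlargement.
case: (boolP (e u y)) => [euy|neuy].
  right; left; exists y, (nbhd e y :\: [set x; u]).
  have [nonconf minor] := split_yu_enlargement se ie cdc eyx euy nd'.
  by split=> //; exact: eq_has_minor (subdiv_joinC e u x y) minor.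
right; right; exists u, x, y; split; first by split.
exact: subgraph_minor.
Qed.
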